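(* Let $n\ge 1$ and let $T\in\mathbb{C}^n\otimes\mathbb{C}^n\otimes\mathbb{C}^n$ have slice rank strictly less than $n$. Then $T$ lies in the nullcone of the action of $G=\mathrm{SL}_n\times\mathrm{SL}_n\times\mathrm{SL}_n$; that is, every homogeneous $G$-invariant polynomial of positive degree on $\mathbb{C}^n\otimes\mathbb{C}^n\otimes\mathbb{C}^n$ vanishes at $T$. *)

From HB Require Import structures.
From mathcomp Require Import all_boot all_order all_algebra.
From mathcomp Require Import mpoly.
Set Implicit Arguments. Unset Strict Implicit. Unset Printing Implicit Defensive.
Import Order.TTheory GRing.Theory Num.Theory.
Local Open Scope ring_scope.

Definition tensor (C : Type) (n : nat) := 'I_n -> 'I_n -> 'I_n -> C.

Section Defs.
Variables (C : numClosedFieldType) (n : nat).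

Definition is_slice (S : tensor C n) : Prop :=
  (exists (a : 'I_n -> C) (b : 'I_n -> 'I_n -> C),
      forall i j k, S i j k = a i * b j k) \/
  (exists (a : 'I_n -> C) (b : 'I_n -> 'I_n -> C),
      forall i j k, S i j k = a j * b i k) \/
  (exists (a : 'I_n -> C) (b : 'I_n -> 'I_n -> C),
      forall i j k, S i j k = a k * b i j).

Definition slice_rank_le (T : tensor C n) (r : nat) : Prop :=
  exists S : 'I_r -> tensor C n,
    (forall s, is_slice (S s)) /\
    (forall i j k, T i j k = \sum_(s < r) S s i j k).

Definition slice_rank_lt (T : tensor C n) (m : nat) : Prop :=
  exists r, (r < m)%N /\ slice_rank_le T r.

Definition tensor_act (A B D : 'M[C]_n) (T : tensor C n) : tensor C n :=
  fun i j k => \sum_(a < n) \sum_(b < n) \sum_(c < n)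
                 A i a * B j b * D k c * T a b c.

Definition nvars := #|{: 'I_n * 'I_n * 'I_n}|.

Definition peval (p : {mpoly C[nvars]}) (T : tensor C n) : C :=
  p.@[fun m : 'I_nvars => let: (i, j, k) := enum_val m in T i j k].

Definition SL3_invariant (p : {mpoly C[nvars]}) : Prop :=
  forall A B D : 'M[C]_n, \det A = 1 -> \det B = 1 -> \det D = 1 ->
    forall T : tensor C n, peval p (tensor_act A B D T) = peval p T.

Definition in_nullcone (T : tensor C n) : Prop :=
  forall (d : nat) (p : {mpoly C[nvars]}),
    (0 < d)%N -> p \is d.-homog -> SL3_invariant p -> peval p T = 0.

End Defs.

From HB Require Import structures.
From mathcomp Require Import all_boot all_order all_algebra.
From mathcomp Require Import mpoly ring.
Set Implicit Arguments. Unset Strict Implicit. Unset Printing Implicit Defensive.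
Import Order.TTheory GRing.Theory Num.Theory.
Local Open Scope ring_scope.

(* A tensor of slice rank r < n is pushed to 0 by a one-parameter family in
   SL_n^3, so every homogeneous invariant of positive degree vanishes at it.
   Write T as a sum of r0 slices a(x)b(y,z), r1 slices a(y)b(x,z) and r2 slices
   a(z)b(x,y), with r0 + r1 + r2 = r (slice_rank_normal_form).  For the n x r_c
   matrix a_c of the vectors of direction c there is a "dilation"
   g_c(u) = 1 - Q_c + u Q_c with g_c(u) a_c = u a_c and det g_c(u) = u^k_c,
   k_c = rank a_c (dilation_eigen).  Acting on T by
   (t^-k_0 g_0(t^n), t^-k_1 g_1(t^n), t^-k_2 g_2(t^n)), which lies in SL_n^3,
   multiplies T by t^(n-K), K = k_0 + k_1 + k_2 < n, up to a deformation F(t)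
   of T that is polynomial in t.  For an invariant p of degree d this gives
   t^(Kd) p(T) = t^(nd) p(F(t)) for all t <> 0, and comparing coefficients of
   these polynomial identities forces p(T) = 0 (vanishing_of_scaling). *)

Section PolynomialFunctions.
Variable R : comNzRingType.

Definition polyfun (f : R -> R) : Prop := exists q : {poly R}, forall t, f t = q.[t].

Lemma polyfun_ext (f g : R -> R) : f =1 g -> polyfun g -> polyfun f.
Proof. by move=> fg [q hq]; exists q => t; rewrite fg. Qed.

Lemma polyfun_cst (c : R) : polyfun (fun=> c).
Proof. by exists c%:P => t; rewrite hornerC. Qed.

Lemma polyfun_id : polyfun id.
Proof. by exists 'X => t; rewrite hornerX. Qed.

Lemma polyfun_add (f g : R -> R) :
  polyfun f -> polyfun g -> polyfun (fun t => f t + g t).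
Proof. by move=> [p hp] [q hq]; exists (p + q) => t; rewrite hornerD hp hq. Qed.

Lemma polyfun_mul (f g : R -> R) :
  polyfun f -> polyfun g -> polyfun (fun t => f t * g t).
Proof. by move=> [p hp] [q hq]; exists (p * q) => t; rewrite hornerM hp hq. Qed.

Lemma polyfun_exp (f : R -> R) m : polyfun f -> polyfun (fun t => f t ^+ m).
Proof. by move=> [p hp]; exists (p ^+ m) => t; rewrite horner_exp hp. Qed.

Lemma polyfun_sum I (s : seq I) (P : pred I) (F : I -> R -> R) :
  (forall i, P i -> polyfun (F i)) -> polyfun (fun t => \sum_(i <- s | P i) F i t).
Proof.
move=> hF; elim: s => [|i s IH].
  by apply: (polyfun_ext _ (polyfun_cst 0)) => t; rewrite big_nil.
case Pi: (P i).
  by apply: (polyfun_ext _ (polyfun_add (hF i Pi) IH)) => t; rewrite big_cons Pi.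
by apply: (polyfun_ext _ IH) => t; rewrite big_cons Pi.
Qed.

Lemma polyfun_prod I (s : seq I) (P : pred I) (F : I -> R -> R) :
  (forall i, P i -> polyfun (F i)) -> polyfun (fun t => \prod_(i <- s | P i) F i t).
Proof.
move=> hF; elim: s => [|i s IH].
  by apply: (polyfun_ext _ (polyfun_cst 1)) => t; rewrite big_nil.
case Pi: (P i).
  by apply: (polyfun_ext _ (polyfun_mul (hF i Pi) IH)) => t; rewrite big_cons Pi.
by apply: (polyfun_ext _ IH) => t; rewrite big_cons Pi.
Qed.

Lemma polyfun_meval N (p : {mpoly R[N]}) (v : R -> 'I_N -> R) :
  (forall i, polyfun (v^~ i)) -> polyfun (fun t => p.@[v t]).
Proof.
move=> hv; apply: (polyfun_ext (fun t => mevalE (v t) p)).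
apply: polyfun_sum => m _; apply: polyfun_mul; first exact: polyfun_cst.
by apply: polyfun_prod => i _; apply: polyfun_exp.
Qed.

Lemma polyfun_mulmx m k l (A : R -> 'M[R]_(m, k)) (B : R -> 'M[R]_(k, l)) :
  (forall i j, polyfun (fun t => A t i j)) -> (forall i j, polyfun (fun t => B t i j)) ->
  forall i j, polyfun (fun t => (A t *m B t) i j).
Proof.
move=> hA hB i j; apply: (polyfun_ext (fun t => mxE _ _ _ _)).
by apply: polyfun_sum => x _; apply: polyfun_mul.
Qed.

Lemma polyfun_congr_mx n (P Q : R -> 'M[R]_n) (b : 'M[R]_n) i j :
  (forall x y, polyfun (fun t => P t x y)) -> (forall x y, polyfun (fun t => Q t x y)) ->
  polyfun (fun t => (P t *m b *m (Q t)^T) i j).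
Proof.
move=> hP hQ; apply: polyfun_mulmx => [x y|x y].
  by apply: polyfun_mulmx => // ? ?; apply: polyfun_cst.
by apply: (@polyfun_ext _ (fun t => Q t y x)) => // t; rewrite mxE.
Qed.

End PolynomialFunctions.

(* In characteristic 0 a polynomial vanishing at every nonzero point is 0,
   since 1, 2, 3, ... are infinitely many distinct nonzero roots. *)
Lemma poly_eq0_nonzero_roots (R : numDomainType) (q : {poly R}) :
  (forall t, t != 0 -> q.[t] = 0) -> q = 0.
Proof.
move=> hq; apply/eqP; apply/negPn/negP => q_neq0.
pose rs := [seq i.+1%:R : R | i <- iota 0 (size q)].
suff: (size rs < size q)%N by rewrite size_map size_iota ltnn.
apply: max_poly_roots q_neq0 _ _.
  by apply/allP => _ /mapP [i _ ->]; apply/rootP; rewrite hq ?pnatr_eq0.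
by rewrite map_inj_uniq ?iota_uniq // => i j /eqP; rewrite eqr_nat eqSS => /eqP.
Qed.

(* The vanishing criterion: if t^e0 c = t^e1 g(t) for all t <> 0, with g
   polynomial and e0 < e1, then c = 0 (compare the coefficients of X^e0). *)
Lemma vanishing_of_scaling (R : numDomainType) (c : R) (g : R -> R) (e0 e1 : nat) :
  (e0 < e1)%N -> polyfun g -> (forall t, t != 0 -> t ^+ e0 * c = t ^+ e1 * g t) -> c = 0.
Proof.
move=> lt_e [q hq] hc.
have q0 : 'X^e1 * q - c *: 'X^e0 = 0.
  apply: poly_eq0_nonzero_roots => t t_neq0.
  by rewrite hornerD hornerN hornerZ hornerXn hornerM hornerXn -hq -hc // mulrC subrr.
have := congr1 (fun q : {poly R} => q`_e0) q0.
rewrite coefB coefXnM lt_e coefZ coefXn eqxx mulr1 coef0 sub0r.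
by move=> /eqP; rewrite oppr_eq0 => /eqP.
Qed.

Section Dilations.
Variables (F : fieldType) (n : nat).

(* The dilation of ratio u along a projection Q: identity on ker Q, u on im Q. *)
Definition dilation (Q : 'M[F]_n) (u : F) : 'M[F]_n := 1 - Q + u *: Q.

Lemma dilation_conj (L P : 'M[F]_n) u : L \in unitmx ->
  dilation (L *m P *m invmx L) u = L *m dilation P u *m invmx L.
Proof.
move=> L_unit; rewrite /dilation mulmxDr mulmxBr mulmx1 !mulmxDl mulNmx.
by rewrite mulmxV // -scalemxAr -scalemxAl.
Qed.

(* Along the coordinate projection pid_mx k the dilation is diagonal with k
   entries u, hence has determinant u ^+ k. *)
Lemma det_dilation_pid k u : (k <= n)%N -> \det (dilation (pid_mx k) u) = u ^+ k.
Proof.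
move=> le_kn.
have -> : dilation (pid_mx k) u = diag_mx (\row_(i < n) if (i < k)%N then u else 1).
  apply/matrixP => i j; rewrite !mxE.
  case: (eqVneq i j) => [<-|ne_ij].
    rewrite !eqxx /=; case: ifP => _;
      by rewrite ?mulr1n ?mulr0n ?mulr1 ?mulr0 ?subr0 ?addr0 // subrr add0r.
  have ne_ij_nat : (i == j :> nat) = false by apply/negbTE; rewrite val_eqE.
  by rewrite ne_ij_nat /= mulr0n mulr0 subrr addr0.
rewrite det_diag (eq_bigr (fun i : 'I_n => if (i < k)%N then u else 1)) => [|i _];
  last by rewrite mxE.
by rewrite -big_mkcond /= -(big_ord_widen _ (fun=> u)) // prodr_const card_ord.
Qed.

(* The columns of any matrix M span the image of a projection Q; the dilation
   along Q scales M by u and has determinant u ^+ rank M. *)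
Lemma dilation_eigen m (M : 'M[F]_(n, m)) : exists Q : 'M[F]_n,
  (forall u, \det (dilation Q u) = u ^+ \rank M) /\ (forall u, dilation Q u *m M = u *: M).
Proof.
set L := col_ebase M; have L_unit : L \in unitmx := col_ebase_unit M.
exists (L *m pid_mx (\rank M) *m invmx L); split => u.
  rewrite dilation_conj // !det_mulmx det_inv det_dilation_pid ?rank_leq_row //.
  by rewrite mulrC mulrA mulVf ?mul1r // -unitfE -unitmxE.
have QM : L *m pid_mx (\rank M) *m invmx L *m M = M.
  have defM := mulmx_ebase M; rewrite -/L in defM.
  set k := \rank M; set U := row_ebase M in defM *.
  by rewrite -defM -!mulmxA mulKmx // (mulmxA (pid_mx k)) pid_mx_id ?rank_leq_row.
by rewrite /dilation mulmxDl mulmxBl mul1mx QM subrr add0r -scalemxAl QM.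
Qed.

Lemma polyfun_dilation (Q : 'M[F]_n) m i j : polyfun (fun t => dilation Q (t ^+ m) i j).
Proof.
apply: (@polyfun_ext _ _ (fun t => (1 - Q) i j + t ^+ m * Q i j)) => [t|].
  by rewrite /dilation [LHS]mxE [X in _ + X]mxE.
apply: polyfun_add; first exact: polyfun_cst.
by apply: polyfun_mul; [apply: polyfun_exp; apply: polyfun_id | apply: polyfun_cst].
Qed.

Lemma det_scaled_dilation (Q : 'M[F]_n) k (t : F) : t != 0 ->
  (forall u, \det (dilation Q u) = u ^+ k) -> \det (t^-1 ^+ k *: dilation Q (t ^+ n)) = 1.
Proof.
by move=> t_neq0 detQ; rewrite detZ detQ -!exprM mulnC exprVn mulVf // expf_neq0.
Qed.

End Dilations.

Lemma meval_homog_scale (R : comNzRingType) N (p : {mpoly R[N]}) d (v : 'I_N -> R) c :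
  p \is d.-homog -> p.@[fun i => c * v i] = c ^+ d * p.@[v].
Proof.
move=> homp; rewrite !mevalE mulr_sumr big_seq [RHS]big_seq; apply: eq_bigr => m msupp_m.
under eq_bigr do rewrite exprMn.
by rewrite big_split /= prodrXr -mdegE (dhomog_mf homp msupp_m) mulrCA.
Qed.

Lemma sum_by_class (V : nmodType) r k (cls : 'I_r -> 'I_k) (F : 'I_r -> V) :
  \sum_s F s = \sum_(c < k) \sum_(t < #|[pred s | cls s == c]|) F (enum_val t).
Proof.
rewrite (partition_big cls xpredT) //=; apply: eq_bigr => c _.
by rewrite -big_enum_val.
Qed.

Section Tensors.
Variables (C : numClosedFieldType) (n : nat).
Implicit Types (A B D : 'M[C]_n) (X Y : tensor C n).

Lemma peval_ext (p : {mpoly C[nvars n]}) X Y :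
  (forall i j k, X i j k = Y i j k) -> peval p X = peval p Y.
Proof. by move=> XY; apply: meval_eq => m; case: (enum_val m) => [[i j] k]. Qed.

Lemma peval_homog_scale (p : {mpoly C[nvars n]}) d X c :
  p \is d.-homog -> peval p (fun i j k => c * X i j k) = c ^+ d * peval p X.
Proof.
move=> homp; rewrite /peval -meval_homog_scale //.
by apply: meval_eq => m; case: (enum_val m) => [[i j] k].
Qed.

Lemma in_nullcone_ext X Y :
  (forall i j k, X i j k = Y i j k) -> in_nullcone Y -> in_nullcone X.
Proof.
by move=> XY nullY d p d_gt0 homp invp; rewrite (peval_ext p XY); apply: (nullY d).
Qed.

Lemma polyfun_peval (p : {mpoly C[nvars n]}) (X : C -> tensor C n) :
  (forall i j k, polyfun (fun t => X t i j k)) -> polyfun (fun t => peval p (X t)).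
Proof. by move=> hX; apply: polyfun_meval => m; case: (enum_val m) => [[i j] k]. Qed.

Lemma tensor_act_add A B D X Y i j k :
  tensor_act A B D (fun x y z => X x y z + Y x y z) i j k =
  tensor_act A B D X i j k + tensor_act A B D Y i j k.
Proof.
rewrite /tensor_act -!big_split; apply: eq_bigr => x _.
rewrite -!big_split; apply: eq_bigr => y _.
by rewrite -!big_split; apply: eq_bigr => z _; rewrite mulrDr.
Qed.

Lemma tensor_act_sum A B D r (X : 'I_r -> tensor C n) i j k :
  tensor_act A B D (fun x y z => \sum_s X s x y z) i j k =
  \sum_s tensor_act A B D (X s) i j k.
Proof.
rewrite /tensor_act.
under eq_bigr do under eq_bigr do under eq_bigr do rewrite mulr_sumr.
under eq_bigr do under eq_bigr do rewrite exchange_big.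
by under eq_bigr do rewrite exchange_big; rewrite exchange_big.
Qed.

Lemma tensor_act_scale A B D X (c0 c1 c2 : C) i j k :
  tensor_act (c0 *: A) (c1 *: B) (c2 *: D) X i j k = c0 * c1 * c2 * tensor_act A B D X i j k.
Proof.
rewrite /tensor_act mulr_sumr; apply: eq_bigr => x _; rewrite mulr_sumr.
apply: eq_bigr => y _; rewrite mulr_sumr; apply: eq_bigr => z _; rewrite !mxE; ring.
Qed.

Lemma congr_mx_entry A b D j k :
  (A *m b *m D^T) j k = \sum_y \sum_z A j y * D k z * b y z.
Proof.
rewrite mxE; under eq_bigr do rewrite !mxE mulr_suml.
rewrite exchange_big; apply: eq_bigr => y _; apply: eq_bigr => z _; ring.
Qed.

Lemma tensor_act_slice1 r A B D (a : 'M[C]_(n, r)) (b : 'M[C]_n) s i j k :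
  tensor_act A B D (fun x y z => a x s * b y z) i j k = (A *m a) i s * (B *m b *m D^T) j k.
Proof.
rewrite congr_mx_entry !mxE mulr_suml; apply: eq_bigr => x _.
rewrite mulr_sumr; apply: eq_bigr => y _; rewrite mulr_sumr; apply: eq_bigr => z _; ring.
Qed.

Lemma tensor_act_slice2 r A B D (a : 'M[C]_(n, r)) (b : 'M[C]_n) s i j k :
  tensor_act A B D (fun x y z => a y s * b x z) i j k = (B *m a) j s * (A *m b *m D^T) i k.
Proof.
rewrite congr_mx_entry !mxE mulr_suml /tensor_act exchange_big; apply: eq_bigr => y _.
rewrite mulr_sumr; apply: eq_bigr => x _; rewrite mulr_sumr; apply: eq_bigr => z _; ring.
Qed.

Lemma tensor_act_slice3 r A B D (a : 'M[C]_(n, r)) (b : 'M[C]_n) s i j k :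
  tensor_act A B D (fun x y z => a z s * b x y) i j k = (D *m a) k s * (A *m b *m B^T) i j.
Proof.
rewrite congr_mx_entry !mxE mulr_suml /tensor_act.
under eq_bigr do rewrite exchange_big.
rewrite exchange_big; apply: eq_bigr => z _.
rewrite mulr_sumr; apply: eq_bigr => x _; rewrite mulr_sumr; apply: eq_bigr => y _; ring.
Qed.

Definition slice (c : 'I_3) (a : 'I_n -> C) (b : 'M[C]_n) : tensor C n :=
  fun i j k => match val c with 0 => a i * b j k | 1 => a j * b i k | _ => a k * b i j end.

Lemma is_sliceP X : is_slice X ->
  exists x : 'I_3 * ('I_n -> C) * 'M[C]_n, forall i j k, X i j k = slice x.1.1 x.1.2 x.2 i j k.
Proof.
case=> [|[|]] [a [b defX]].
- by exists (ord0, a, \matrix_(y, z) b y z) => i j k; rewrite defX /slice /= mxE.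
- by exists (lift ord0 ord0, a, \matrix_(y, z) b y z) => i j k; rewrite defX /slice /= mxE.
- by exists (ord_max, a, \matrix_(y, z) b y z) => i j k; rewrite defX /slice /= mxE.
Qed.

(* A sum of r0, r1 and r2 slices in directions 1, 2 and 3; the vectors of
   direction c are the columns of the n x r_c matrix a_c. *)
Definition slice_sum r0 r1 r2 (a0 : 'M[C]_(n, r0)) (b0 : 'I_r0 -> 'M[C]_n)
    (a1 : 'M[C]_(n, r1)) (b1 : 'I_r1 -> 'M[C]_n)
    (a2 : 'M[C]_(n, r2)) (b2 : 'I_r2 -> 'M[C]_n) : tensor C n :=
  fun i j k => \sum_s a0 i s * b0 s j k + \sum_s a1 j s * b1 s i k + \sum_s a2 k s * b2 s i j.

Lemma slice_rank_normal_form X r : slice_rank_le X r ->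
  exists r0 r1 r2 (a0 : 'M[C]_(n, r0)) b0 (a1 : 'M[C]_(n, r1)) b1 (a2 : 'M[C]_(n, r2)) b2,
    (r0 + r1 + r2)%N = r /\ forall i j k, X i j k = slice_sum a0 b0 a1 b1 a2 b2 i j k.
Proof.
move=> [S [slS defX]].
have [x defS] := fin_all_exists (fun s => is_sliceP (slS s)).
pose cls s := (x s).1.1.
pose a c := \matrix_(y < n, t < #|[pred s | cls s == c]|) (x (enum_val t)).1.2 y.
pose b c (t : 'I_#|[pred s | cls s == c]|) := (x (enum_val t)).2.
exists _, _, _, (a ord0), (b ord0), (a (lift ord0 ord0)), (b (lift ord0 ord0)),
  (a ord_max), (b ord_max).
split.
  have := sum_by_class cls (fun=> 1%N).
  rewrite sum1_card card_ord !big_ord_recl big_ord0 => /esym defr; rewrite -[RHS]defr.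
  by rewrite !sum1_card !card_ord addr0 addrA.
move=> i j k; rewrite defX (sum_by_class cls) !big_ord_recl big_ord0 addr0 addrA.
rewrite /slice_sum; congr (_ + _ + _); apply: eq_bigr => t _;
  by rewrite defS mxE; move: (enum_valP t); rewrite inE /cls => /eqP ->.
Qed.

Lemma tensor_act_slice_sum A B D r0 r1 r2 (a0 : 'M[C]_(n, r0)) b0 (a1 : 'M[C]_(n, r1)) b1
    (a2 : 'M[C]_(n, r2)) b2 i j k :
  tensor_act A B D (slice_sum a0 b0 a1 b1 a2 b2) i j k =
  slice_sum (A *m a0) (fun s => B *m b0 s *m D^T) (B *m a1) (fun s => A *m b1 s *m D^T)
    (D *m a2) (fun s => A *m b2 s *m B^T) i j k.
Proof.
rewrite /slice_sum !tensor_act_add !tensor_act_sum.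
by congr (_ + _ + _); apply: eq_bigr => s _;
  rewrite ?tensor_act_slice1 ?tensor_act_slice2 ?tensor_act_slice3.
Qed.

Lemma slice_sum_scale r0 r1 r2 (a0 : 'M[C]_(n, r0)) b0 (a1 : 'M[C]_(n, r1)) b1
    (a2 : 'M[C]_(n, r2)) b2 u i j k :
  slice_sum (u *: a0) b0 (u *: a1) b1 (u *: a2) b2 i j k = u * slice_sum a0 b0 a1 b1 a2 b2 i j k.
Proof.
rewrite /slice_sum !mulrDr !mulr_sumr.
by congr (_ + _ + _); apply: eq_bigr => s _; rewrite mxE mulrA.
Qed.

Lemma polyfun_slice_sum r0 r1 r2 (a0 : 'M[C]_(n, r0)) (b0 : C -> 'I_r0 -> 'M[C]_n)
    (a1 : 'M[C]_(n, r1)) (b1 : C -> 'I_r1 -> 'M[C]_n)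
    (a2 : 'M[C]_(n, r2)) (b2 : C -> 'I_r2 -> 'M[C]_n) :
  (forall s y z, polyfun (fun t => b0 t s y z)) ->
  (forall s y z, polyfun (fun t => b1 t s y z)) ->
  (forall s y z, polyfun (fun t => b2 t s y z)) ->
  forall i j k, polyfun (fun t => slice_sum a0 (b0 t) a1 (b1 t) a2 (b2 t) i j k).
Proof.
move=> h0 h1 h2 i j k.
rewrite /slice_sum; do 2?apply: polyfun_add;
  by apply: polyfun_sum => s _; apply: polyfun_mul => //; apply: polyfun_cst.
Qed.

Section Deformation.
Variables (r0 r1 r2 : nat) (a0 : 'M[C]_(n, r0)) (b0 : 'I_r0 -> 'M[C]_n).
Variables (a1 : 'M[C]_(n, r1)) (b1 : 'I_r1 -> 'M[C]_n).
Variables (a2 : 'M[C]_(n, r2)) (b2 : 'I_r2 -> 'M[C]_n).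
Variables Q0 Q1 Q2 : 'M[C]_n.

Definition deformation (t : C) : tensor C n :=
  let g Q := dilation Q (t ^+ n) in
  slice_sum a0 (fun s => g Q1 *m b0 s *m (g Q2)^T) a1 (fun s => g Q0 *m b1 s *m (g Q2)^T)
    a2 (fun s => g Q0 *m b2 s *m (g Q1)^T).

Lemma dilations_act_slice_sum t i j k :
  (forall u, dilation Q0 u *m a0 = u *: a0) -> (forall u, dilation Q1 u *m a1 = u *: a1) ->
  (forall u, dilation Q2 u *m a2 = u *: a2) ->
  tensor_act (dilation Q0 (t ^+ n)) (dilation Q1 (t ^+ n)) (dilation Q2 (t ^+ n))
    (slice_sum a0 b0 a1 b1 a2 b2) i j k = t ^+ n * deformation t i j k.
Proof.
by move=> fix0 fix1 fix2; rewrite tensor_act_slice_sum fix0 fix1 fix2 slice_sum_scale.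
Qed.

Lemma polyfun_deformation (p : {mpoly C[nvars n]}) : polyfun (fun t => peval p (deformation t)).
Proof.
apply: polyfun_peval; apply: polyfun_slice_sum => s y z;
  by apply: polyfun_congr_mx => x w; apply: polyfun_dilation.
Qed.

End Deformation.

Lemma slice_sum_nullcone r0 r1 r2 (a0 : 'M[C]_(n, r0)) b0 (a1 : 'M[C]_(n, r1)) b1
    (a2 : 'M[C]_(n, r2)) b2 :
  (r0 + r1 + r2 < n)%N -> in_nullcone (slice_sum a0 b0 a1 b1 a2 b2).
Proof.
move=> small d p d_gt0 homp invp.
have [Q0 [det0 fix0]] := dilation_eigen a0.
have [Q1 [det1 fix1]] := dilation_eigen a1.
have [Q2 [det2 fix2]] := dilation_eigen a2.
set T := slice_sum a0 b0 a1 b1 a2 b2.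
pose K := (\rank a0 + \rank a1 + \rank a2)%N.
pose F := deformation a0 b0 a1 b1 a2 b2 Q0 Q1 Q2.
apply: (@vanishing_of_scaling _ _ (fun t => peval p (F t)) (K * d) (n * d)).
- by rewrite ltn_pmul2r // (leq_ltn_trans _ small) // !leq_add ?rank_leq_col.
- exact: polyfun_deformation.
move=> t t_neq0.
have scaled_act i j k : tensor_act (t^-1 ^+ \rank a0 *: dilation Q0 (t ^+ n))
    (t^-1 ^+ \rank a1 *: dilation Q1 (t ^+ n)) (t^-1 ^+ \rank a2 *: dilation Q2 (t ^+ n))
    T i j k = (t^-1 ^+ K * t ^+ n) * F t i j k.
  by rewrite tensor_act_scale dilations_act_slice_sum // !exprD !mulrA.
rewrite -(invp _ _ _ (det_scaled_dilation t_neq0 det0) (det_scaled_dilation t_neq0 det1)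
  (det_scaled_dilation t_neq0 det2)).
rewrite (peval_ext _ scaled_act) (peval_homog_scale _ _ homp) exprMn -!exprM exprVn.
by rewrite !mulrA mulfV ?mul1r // expf_neq0.
Qed.

End Tensors.

Unset Implicit Arguments.
Set Strict Implicit.
Theorem lemma4 (C : numClosedFieldType) (n : nat) (hn : (1 <= n)%N)
    (T : tensor C n) :
  slice_rank_lt T n -> in_nullcone T.
Proof.
move=> [r [lt_rn /slice_rank_normal_form]].
move=> [r0 [r1 [r2 [a0 [b0 [a1 [b1 [a2 [b2 [sum_r defT]]]]]]]]]].
by apply: (in_nullcone_ext defT); apply: slice_sum_nullcone; rewrite sum_r.
Qed.
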